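(* There is a quantum $k$-party $\mathsf{SMP}$ protocol (no shared randomness or entanglement) for $\mathrm{GroupByEQ}_{k,n}$ with communication cost $O(k\log k\log n)$ that outputs a correct answer with probability at least $2/3$ on every input.
   Context: Quantum $k$-party $\mathsf{SMP}$ model: $k$ players with private inputs $x_1,\dots,x_k\in\{0,1\}^n$ each send one quantum message, depending only on their own input, to a referee, who outputs an answer; cost is the total number of qubits sent. $\mathrm{GroupByEQ}_{k,n}$: the referee must output a partition $P_1,\dots,P_s$ of $[k]$ such that for all $i,j\in[k]$, $i$ and $j$ lie in a common part if and only if $x_i=x_j$. *)

From HB Require Import structures.
From mathcomp Require Import all_boot all_order all_algebra all_field.
Set Implicit Arguments. Unset Strict Implicit. Unset Printing Implicit Defensive.
Import Order.TTheory GRing.Theory Num.Theory.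
Local Open Scope ring_scope.

(* A linear operator on the Hilbert space with orthonormal basis indexed by T,
   given by its matrix entries <a|M|b> = M a b. *)
Definition op (T : finType) := T -> T -> algC.

(* Positive semidefinite: <v|M|v> >= 0 for every vector v (in algC, 0 <= z
   means z is a nonnegative real). *)
Definition psd (T : finType) (M : op T) : Prop :=
  forall v : T -> algC, 0 <= \sum_(a : T) \sum_(b : T) (v a)^* * M a b * v b.

Definition trace (T : finType) (M : op T) : algC := \sum_(a : T) M a a.

Definition density (T : finType) (M : op T) : Prop := psd M /\ trace M = 1.

Definition idop (T : finType) : op T := fun a b => (a == b)%:R.

Definition povm (O T : finType) (E : O -> op T) : Prop :=
  (forall o, psd (E o)) /\ (forall a b, \sum_(o : O) E o a b = idop a b).

Definition outcome_prob (O T : finType) (E : O -> op T) (rho : op T) (o : O) : algC :=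
  \sum_(a : T) \sum_(b : T) E o a b * rho b a.

Definition qbasis (m : nat) := {ffun 'I_m -> bool}.

(* Computational basis of the joint register of k players, player i holding q i qubits. *)
Definition jbasis (k : nat) (q : 'I_k -> nat) := {dffun forall i : 'I_k, qbasis (q i)}.

Definition tensor_states (k : nat) (q : 'I_k -> nat)
  (rho : forall i : 'I_k, op (qbasis (q i))) : op (jbasis q) :=
  fun a b => \prod_(i < k) rho i (a i) (b i).

Definition groupbyeq_correct (k n : nat) (x : 'I_k -> n.-tuple bool)
  (P : {set {set 'I_k}}) : bool :=
  partition P [set: 'I_k] &&
  [forall i : 'I_k, forall j : 'I_k,
     [exists B in P, (i \in B) && (j \in B)] == (x i == x j)].

(* Player i sends r copies of the fingerprint |x_i> = |F|^(-1/2) sum_(a in F) |a, p_x(a)>,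
   where p_x is the polynomial over a field F with |F| >= 2n whose coefficients are the bits
   of x; distinct inputs give polynomials agreeing on at most n - 1 points, so their
   fingerprints have overlap at most 1/2. For each ordered pair (i, j) the referee projects
   onto the states invariant under swapping any subset of the copies of i and j, i.e. runs r
   swap tests: this accepts with certainty when x_i = x_j, and with probability
   ((1 + <x_i|x_j>^2) / 2)^r <= (5/8)^r otherwise. Taking r of order log k, each of the k^2
   projective tests errs with squared amplitude at most 1/(64 k^2); since a test that almost
   surely succeeds barely disturbs the state, the errors add up along the sequence of
   measurements, and the partition decoded from the outcomes is correct with probability at
   least 2/3. The cost is k * r * 2 log |F| = O(k log k log n) qubits. *)

From HB Require Import structures.
From mathcomp Require Import all_boot all_order all_algebra all_field.
From mathcomp Require Import ring perm zify.
From Stdlib Require Import FunctionalExtensionality.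
Set Implicit Arguments. Unset Strict Implicit. Unset Printing Implicit Defensive.
Import Order.TTheory GRing.Theory Num.Theory.
Local Open Scope ring_scope.

Lemma all2_map_map (A B C : Type) (R : A -> B -> bool) (f : C -> A) (g : C -> B) t :
  (forall c, R (f c) (g c)) -> all2 R (map f t) (map g t).
Proof. by move=> Rfg; elim: t => //= c t ->; rewrite Rfg. Qed.

Section Hilbert.
Variable T : finType.
Implicit Types (M N Q : op T) (u v w z : T -> algC).

Definition qform M v := \sum_(a : T) \sum_(b : T) (v a)^* * M a b * v b.
Definition dotv u v := \sum_(a : T) (u a)^* * v a.
Definition sqnorm v := dotv v v.
Definition opv M v := fun a => \sum_(b : T) M a b * v b.
Definition hermitian M := forall a b, M b a = (M a b)^*.
Definition orthoproj M := hermitian M /\ forall a b, \sum_(c : T) M a c * M c b = M a b.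
Definition op_compl M : op T := fun a b => idop a b - M a b.
Definition outcome_proj (b : bool) M := if b then M else op_compl M.
Definition sandwich Q M : op T := fun a b => \sum_(c : T) \sum_(d : T) Q a c * M c d * Q d b.
Definition subv u v := fun a => u a - v a.

Lemma sum_idopl a (g : T -> algC) : \sum_(b : T) idop a b * g b = g a.
Proof.
rewrite (bigD1 a) //= /idop eqxx mul1r big1 ?addr0 // => b.
by rewrite eq_sym => /negbTE ->; rewrite mul0r.
Qed.

Lemma sum_idopr b (g : T -> algC) : \sum_(a : T) g a * idop a b = g b.
Proof.
rewrite (bigD1 b) //= /idop eqxx mulr1 big1 ?addr0 // => a /negbTE ->.
by rewrite mulr0.
Qed.

Lemma conj_idop (a b : T) : (idop a b)^* = idop a b.
Proof. by rewrite /idop conjC_nat. Qed.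

Lemma sqnorm_ge0 v : 0 <= sqnorm v.
Proof. by apply: sumr_ge0 => a _; rewrite mulrC mul_conjC_ge0. Qed.

Lemma hermitian_idop : hermitian (@idop T).
Proof. by move=> a b; rewrite conj_idop /idop eq_sym. Qed.

Lemma orthoproj_compl M : orthoproj M -> orthoproj (op_compl M).
Proof.
move=> [hM pM]; split.
  by move=> a b; rewrite /op_compl rmorphB /= hM hermitian_idop.
move=> a b; rewrite /op_compl.
under eq_bigr => c _ do rewrite mulrBl !mulrBr.
rewrite !sumrB sum_idopl sum_idopl sum_idopr pM /idop; ring.
Qed.

Lemma op_complK M (a b : T) : op_compl (op_compl M) a b = M a b.
Proof. by rewrite /op_compl opprB addrC subrK. Qed.

Lemma orthoproj_outcome b M : orthoproj M -> orthoproj (outcome_proj b M).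
Proof. by case: b => //= /orthoproj_compl. Qed.

Lemma qform_sandwich Q M v : hermitian Q -> qform (sandwich Q M) v = qform M (opv Q v).
Proof.
move=> hQ; rewrite /qform /sandwich /opv.
transitivity (\sum_a \sum_b \sum_c \sum_d (v a)^* * Q a c * M c d * (Q d b * v b)).
  apply: eq_bigr => a _; apply: eq_bigr => b _.
  rewrite mulr_sumr mulr_suml; apply: eq_bigr => c _.
  rewrite mulr_sumr mulr_suml; apply: eq_bigr => d _; ring.
symmetry.
transitivity (\sum_c \sum_d \sum_a \sum_b (v a)^* * Q a c * M c d * (Q d b * v b)).
  apply: eq_bigr => c _; apply: eq_bigr => d _.
  rewrite rmorph_sum /= mulr_suml mulr_suml; apply: eq_bigr => a _.
  rewrite mulr_sumr; apply: eq_bigr => b _.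
  by rewrite rmorphM /= -hQ; ring.
under eq_bigr => c _ do rewrite exchange_big.
rewrite exchange_big; apply: eq_bigr => a _.
under eq_bigr => c _ do rewrite exchange_big.
by rewrite exchange_big.
Qed.

Lemma psd_sandwich Q M : hermitian Q -> psd M -> psd (sandwich Q M).
Proof. by move=> hQ pM v; move: (qform_sandwich M v hQ); rewrite /qform => ->; apply: pM. Qed.

Lemma qform_sum (I : finType) (Ms : I -> op T) v :
  qform (fun a b => \sum_(i : I) Ms i a b) v = \sum_(i : I) qform (Ms i) v.
Proof.
rewrite /qform.
transitivity (\sum_a \sum_b \sum_(i : I) (v a)^* * Ms i a b * v b).
  by apply: eq_bigr => a _; apply: eq_bigr => b _; rewrite mulr_sumr mulr_suml.
under eq_bigr => a _ do rewrite exchange_big.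
by rewrite exchange_big.
Qed.

Lemma qform_idop v : qform (@idop T) v = sqnorm v.
Proof.
rewrite /qform /sqnorm /dotv; apply: eq_bigr => a _.
under eq_bigr => b _ do rewrite -mulrA.
by rewrite -mulr_sumr sum_idopl.
Qed.

Lemma opv_sub M u w a : opv M (subv u w) a = opv M u a - opv M w a.
Proof. by rewrite /opv /subv -sumrB; apply: eq_bigr => b _; rewrite mulrBr. Qed.

Lemma opv_compl M v a : opv (op_compl M) v a = v a - opv M v a.
Proof.
rewrite /opv /op_compl.
under eq_bigr => b _ do rewrite mulrBl.
by rewrite sumrB sum_idopl.
Qed.

Lemma dotv_hermitian M u w : hermitian M -> dotv (opv M u) w = dotv u (opv M w).
Proof.
move=> hM; rewrite /dotv /opv.
under eq_bigr => a _ do rewrite rmorph_sum /= mulr_suml.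
rewrite exchange_big; apply: eq_bigr => b _.
rewrite mulr_sumr; apply: eq_bigr => a _.
by rewrite rmorphM /= -hM; ring.
Qed.

Lemma opv_comp M N v a : opv M (opv N v) a = opv (fun a b => \sum_c M a c * N c b) v a.
Proof.
rewrite /opv.
under eq_bigr => c _ do rewrite mulr_sumr.
rewrite exchange_big; apply: eq_bigr => b _.
by rewrite mulr_suml; apply: eq_bigr => c _; rewrite mulrA.
Qed.

Lemma dotv_compl_proj Q x y : orthoproj Q -> dotv (opv (op_compl Q) x) (opv Q y) = 0.
Proof.
move=> PQ; have [hc _] := orthoproj_compl PQ; rewrite dotv_hermitian //.
rewrite /dotv big1 // => a _.
rewrite opv_comp.
have -> : opv (fun a0 b => \sum_c op_compl Q a0 c * Q c b) y a = 0.
  rewrite /opv big1 // => b _.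
  rewrite /op_compl.
  under eq_bigr => c _ do rewrite mulrBl.
  by rewrite sumrB sum_idopl PQ.2 subrr mul0r.
by rewrite mulr0.
Qed.

Lemma sqnorm_add_orth x y : dotv x y = 0 ->
  sqnorm (fun a => x a + y a) = sqnorm x + sqnorm y.
Proof.
move=> o; have o' : dotv y x = 0.
  have <- : (dotv x y)^* = dotv y x.
    by rewrite /dotv rmorph_sum; apply: eq_bigr => a _; rewrite rmorphM /= conjCK mulrC.
  by rewrite o conjC0.
rewrite /sqnorm /dotv.
transitivity (\sum_a ((x a)^* * x a + (y a)^* * y a) + (dotv x y + dotv y x)).
  rewrite /dotv -!big_split /=; apply: eq_bigr => a _.
  by rewrite rmorphD /=; ring.
by rewrite o o' addr0 big_split /=; rewrite addr0.
Qed.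

Lemma sqnorm_compl_proj_add Q x y : orthoproj Q ->
  sqnorm (fun a => opv (op_compl Q) x a + opv Q y a)
  = sqnorm (opv (op_compl Q) x) + sqnorm (opv Q y).
Proof. by move=> PQ; apply: sqnorm_add_orth; apply: dotv_compl_proj. Qed.

Lemma sqnorm_proj_le Q y : orthoproj Q -> sqnorm (opv Q y) <= sqnorm y.
Proof.
move=> PQ.
have -> : sqnorm y = sqnorm (fun a => opv (op_compl Q) y a + opv Q y a).
  congr sqnorm; apply: functional_extensionality => a.
  by rewrite opv_compl subrK.
by rewrite sqnorm_compl_proj_add // lerDr sqnorm_ge0.
Qed.

Lemma sqnorm_proj_qform Q v : orthoproj Q -> sqnorm (opv Q v) = qform Q v.
Proof.
move=> [hQ pQ]; rewrite /sqnorm (dotv_hermitian _ _ hQ).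
rewrite /dotv /qform.
transitivity (\sum_a (v a)^* * opv Q v a).
  apply: eq_bigr => a _; rewrite opv_comp /opv.
  by under eq_bigr => b _ do rewrite pQ.
by apply: eq_bigr => a _; rewrite /opv mulr_sumr; apply: eq_bigr => b _; rewrite mulrA.
Qed.

End Hilbert.

Section SequentialMeasurement.
Variables (T O : finType).
Implicit Types (M N Q : op T) (u v w z : T -> algC).

Fixpoint all_orthoproj (L : seq (op T)) : Prop :=
  match L with [::] => True | P :: Ps => orthoproj P /\ all_orthoproj Ps end.

(* Measure the projections of [L] in turn, each with outcomes [true] (the projection) and
   [false] (its complement), and report [F] of the observed bits. *)
Fixpoint seq_meas (L : seq (op T)) (F : seq bool -> O) (o : O) : op T :=
  match L with
  | [::] => fun a b => (F [::] == o)%:R * idop a b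
  | P :: Ps => fun a b =>
      \sum_(bb : bool) sandwich (outcome_proj bb P) (seq_meas Ps (fun s => F (bb :: s)) o) a b
  end.

Fixpoint seq_project (L : seq (op T)) (bs : seq bool) v : T -> algC :=
  match L, bs with
  | P :: Ps, b :: bs' => seq_project Ps bs' (opv (outcome_proj b P) v)
  | _, _ => v
  end.

Lemma qform_scale_id (c : algC) v : qform (fun a b => c * idop a b) v = c * sqnorm v.
Proof.
rewrite -qform_idop /qform mulr_sumr; apply: eq_bigr => a _; rewrite mulr_sumr.
by apply: eq_bigr => b _; ring.
Qed.

Lemma psd_seq_meas L F o : all_orthoproj L -> psd (seq_meas L F o).
Proof.
elim: L F => [|P Ps IH] F /=.
  move=> _ v; have := qform_scale_id (F [::] == o)%:R v; rewrite /qform => ->.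
  by apply: mulr_ge0; [apply: ler0n | apply: sqnorm_ge0].
move=> [pP aPs] v.
have := qform_sum
  (fun bb : bool => sandwich (outcome_proj bb P) (seq_meas Ps (fun s => F (bb :: s)) o)) v.
rewrite /qform => ->; apply: sumr_ge0 => bb _.
apply: psd_sandwich; last by apply: IH.
by case: (orthoproj_outcome bb pP).
Qed.

Lemma seq_meas_sum L F a b : all_orthoproj L -> \sum_(o : O) seq_meas L F o a b = idop a b.
Proof.
elim: L F a b => [|P Ps IH] F a b /=.
  move=> _; rewrite -mulr_suml (bigD1 (F [::])) //= eqxx big1 ?addr0 ?mul1r //.
  by move=> o; rewrite eq_sym => /negbTE ->.
move=> [pP aPs]; rewrite exchange_big /=.
transitivity (\sum_(bb : bool) \sum_c outcome_proj bb P a c * outcome_proj bb P c b).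
  apply: eq_bigr => bb _; rewrite /sandwich exchange_big; apply: eq_bigr => c _.
  rewrite exchange_big /=.
  transitivity (\sum_d outcome_proj bb P a c * idop c d * outcome_proj bb P d b).
    by apply: eq_bigr => d _; rewrite -mulr_suml -mulr_sumr IH.
  under eq_bigr => d _ do rewrite -mulrA.
  by rewrite -mulr_sumr sum_idopl.
rewrite big_bool /=.
by rewrite (orthoproj_outcome true pP).2 (orthoproj_outcome false pP).2 /= /op_compl addrC subrK.
Qed.

Lemma sqnorm_seq_project_le L F bs v : all_orthoproj L -> size bs = size L ->
  sqnorm (seq_project L bs v) <= qform (seq_meas L F (F bs)) v.
Proof.
elim: L F bs v => [|P Ps IH] F [|b bs] v //=.
  by move=> _ _; rewrite qform_scale_id eqxx mul1r.
move=> [pP aPs] [sz].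
rewrite qform_sum (bigD1 b) //= qform_sandwich; last by case: (orthoproj_outcome b pP).
rewrite -[X in X <= _]addr0; apply: lerD.
  by apply: (IH (fun s => F (b :: s))).
apply: sumr_ge0 => bb _; rewrite qform_sandwich; last by case: (orthoproj_outcome bb pP).
exact: psd_seq_meas.
Qed.

Lemma sqnorm_sub_seq_project_le L bs v (eta : algC) : all_orthoproj L ->
  all2 (fun P b => sqnorm (opv (op_compl (outcome_proj b P)) v) <= eta) L bs ->
  forall z, sqnorm (subv v (seq_project L bs z)) <= sqnorm (subv v z) + (size L)%:R * eta.
Proof.
elim: L bs => [|P Ps IH] [|b bs] //=.
  by move=> _ _ z; rewrite mul0r addr0.
move=> [pP aPs] /andP[hb hall] z.
apply: le_trans (IH _ aPs hall _) _.
have pQ := orthoproj_outcome b pP.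
have -> : subv v (opv (outcome_proj b P) z) =
   (fun a => opv (op_compl (outcome_proj b P)) v a + opv (outcome_proj b P) (subv v z) a).
  apply: functional_extensionality => a.
  by rewrite opv_compl opv_sub /subv; ring.
rewrite sqnorm_compl_proj_add // -addn1 natrD mulrDl mul1r.
rewrite [_ * eta + eta]addrC addrA lerD2r [sqnorm (subv v z) + eta]addrC.
by apply: lerD => //; apply: sqnorm_proj_le.
Qed.

(* For [eps = 1/6]: [|w|^2 >= (1 - eps) |v|^2 - (1/eps - 1) |v - w|^2], coordinatewise a
   completed square. *)
Lemma sqnorm_lb_sub v w : 5%:R / 6%:R * sqnorm v - 5%:R * sqnorm (subv v w) <= sqnorm w.
Proof.
have square (a b : algC) : b^* * b - (5%:R / 6%:R * (a^* * a) - 5%:R * ((a - b)^* * (a - b)))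
    = 6%:R^-1 * ((6%:R * b - 5%:R * a)^* * (6%:R * b - 5%:R * a)).
  by rewrite !rmorphB /= !rmorphM /= !conjC_nat; field.
rewrite /sqnorm /dotv !mulr_sumr -sumrB; apply: ler_sum => a _.
rewrite -subr_ge0 square mulr_ge0 ?invr_ge0 ?ler0n //.
by rewrite mulrC mul_conjC_ge0.
Qed.

(* Gentle measurement: a test that rarely fails barely moves the state, so the errors of
   the successive tests only add up. *)
Lemma qform_seq_meas_ge L F bs v (eta : algC) : all_orthoproj L -> sqnorm v = 1 ->
  all2 (fun P b => sqnorm (opv (op_compl (outcome_proj b P)) v) <= eta) L bs ->
  (size L)%:R * eta <= 64%:R^-1 ->
  2%:R / 3%:R <= qform (seq_meas L F (F bs)) v.
Proof.
move=> aL v1 err small.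
have size_bs : size bs = size L by move: err; rewrite all2E => /andP[/eqP].
have drift := sqnorm_sub_seq_project_le aL err v.
have v_v : sqnorm (subv v v) = 0.
  by rewrite /sqnorm /dotv big1 // => a _; rewrite /subv subrr mulr0.
rewrite v_v add0r in drift.
apply: le_trans (sqnorm_seq_project_le F v aL size_bs).
apply: le_trans (sqnorm_lb_sub v (seq_project L bs v)).
rewrite v1 mulr1.
apply: (@le_trans _ _ (5%:R / 6%:R - 5%:R * 64%:R^-1)).
  have -> : 5%:R / 6%:R - 5%:R * 64%:R^-1 = 2%:R / 3%:R + 17%:R / 192%:R :> algC by field.
  by rewrite lerDl divr_ge0 ?ler0n.
by rewrite lerD2l lerN2 ler_wpM2l ?ler0n // (le_trans drift).
Qed.

End SequentialMeasurement.

Section SwapTest.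
Variables (k r : nat) (Y V : finType) (G : V -> Y -> algC).
Hypothesis G_real : forall u y, (G u y)^* = G u y.
Definition overlap (u w : V) := \sum_(y : Y) G u y * G w y.
Hypothesis overlap_self : forall u, overlap u u = 1.
Hypothesis overlap_ge0 : forall u w, u != w -> 0 <= overlap u w.
Hypothesis overlap_le : forall u w, u != w -> overlap u w <= 2%:R^-1.

Definition regs := {ffun 'I_k -> {ffun 'I_r -> Y}}.
Definition mask := {ffun 'I_r -> bool}.

Definition swap_index (i j : 'I_k) (U : mask) (c : 'I_r) (l : 'I_k) : 'I_k :=
  if U c then tperm i j l else l.

Lemma swap_indexK i j U c : involutive (swap_index i j U c).
Proof. by move=> l; rewrite /swap_index; case: (U c) => //; rewrite tpermK. Qed.

Definition pswap i j (U : mask) (A : regs) : regs :=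
  [ffun l => [ffun c => A (swap_index i j U c l) c]].
Definition mask_xor (U V0 : mask) : mask := [ffun c => U c (+) V0 c].

Lemma pswap_comp i j U V0 A : pswap i j U (pswap i j V0 A) = pswap i j (mask_xor U V0) A.
Proof.
apply/ffunP => l; apply/ffunP => c; rewrite !ffunE /swap_index !ffunE.
by case: (U c); case: (V0 c) => //=; rewrite tpermK.
Qed.

Lemma pswap0 i j A : pswap i j [ffun=> false] A = A.
Proof. by apply/ffunP => l; apply/ffunP => c; rewrite !ffunE /swap_index ffunE. Qed.

Lemma mask_xorK U : mask_xor U U = [ffun=> false].
Proof. by apply/ffunP => c; rewrite !ffunE addbb. Qed.

Lemma pswapK i j U : involutive (pswap i j U).
Proof. by move=> A; rewrite pswap_comp mask_xorK pswap0. Qed.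

Lemma eq_pswap i j U A B : (A == pswap i j U B) = (B == pswap i j U A).
Proof.
apply/eqP/eqP => ->; by rewrite pswapK.
Qed.

Definition inv_nmasks : algC := (2 ^ r)%:R^-1.

Lemma card_mask : #|{: mask}| = (2 ^ r)%N.
Proof. by rewrite card_ffun card_bool card_ord. Qed.

Lemma sum_const_mask (c : algC) : \sum_(U : mask) c = (2 ^ r)%:R * c.
Proof. by rewrite sumr_const card_mask mulr_natl. Qed.

Lemma inv_nmasksK : inv_nmasks * (2 ^ r)%:R = 1.
Proof. by rewrite /inv_nmasks mulVf // pnatr_eq0 expn_eq0. Qed.

(* Averaging the register permutations [pswap i j U], which exchange copy [c] of players
   [i] and [j] for each [c] in [U], gives the projector onto the invariant states: the
   product of the [r] swap-test projectors (1 + SWAP_c) / 2. *)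
Definition swap_proj i j : op regs :=
  fun A B => inv_nmasks * \sum_(U : mask) (A == pswap i j U B)%:R.

Lemma hermitian_swap_proj i j : hermitian (swap_proj i j).
Proof.
move=> A B; rewrite /swap_proj rmorphM /= /inv_nmasks fmorphV /= conjC_nat rmorph_sum /=.
by congr (_ * _); apply: eq_bigr => U _; rewrite conjC_nat eq_pswap.
Qed.

Lemma mask_xor_inj U : injective (mask_xor U).
Proof.
move=> V1 V2 h; apply/ffunP => c.
by move/ffunP: h => /(_ c); rewrite !ffunE => /addbI.
Qed.

Lemma orthoproj_swap_proj i j : orthoproj (swap_proj i j).
Proof.
split; first exact: hermitian_swap_proj.
move=> A B; rewrite /swap_proj.
transitivity (inv_nmasks * inv_nmasks *
  \sum_(U : mask) \sum_(V0 : mask) (A == pswap i j U (pswap i j V0 B))%:R).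
  transitivity (\sum_(C : regs) inv_nmasks * (inv_nmasks *
    ((\sum_(U : mask) (A == pswap i j U C)%:R) * (\sum_(V0 : mask) (C == pswap i j V0 B)%:R)))).
    by apply: eq_bigr => C _; ring.
  rewrite -mulr_sumr -mulr_sumr mulrA; congr (_ * _).
  under eq_bigr => C _ do rewrite mulr_suml.
  rewrite exchange_big; apply: eq_bigr => U _.
  under eq_bigr => C _ do rewrite mulr_sumr.
  rewrite exchange_big; apply: eq_bigr => V0 _.
  have := sum_idopr (pswap i j V0 B) (fun C : regs => (A == pswap i j U C)%:R).
  rewrite /idop => <-; apply: eq_bigr => C _; ring.
(* Masks compose by [mask_xor], so the double average collapses to a single one. *)
under eq_bigr => U _ do (under eq_bigr => V0 _ do rewrite pswap_comp).
transitivity (inv_nmasks * inv_nmasks * \sum_(U : mask) \sum_(W : mask) (A == pswap i j W B)%:R).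
  congr (_ * _); apply: eq_bigr => U _; symmetry.
  by rewrite [LHS](reindex_inj (@mask_xor_inj U)).
by rewrite sum_const_mask mulrA -(mulrA inv_nmasks inv_nmasks) inv_nmasksK mulr1.
Qed.

Lemma swap_proj_fix i j (f : regs -> algC) :
  (forall U A, f (pswap i j U A) = f A) -> forall A, opv (swap_proj i j) f A = f A.
Proof.
move=> f_inv A; rewrite /opv /swap_proj.
under eq_bigr => B _ do rewrite -mulrA mulr_suml mulr_sumr.
rewrite exchange_big /=.
transitivity (\sum_(U : mask) inv_nmasks * f A).
  apply: eq_bigr => U _; rewrite -mulr_sumr; congr (_ * _).
  under eq_bigr => B _ do rewrite eq_pswap mulrC.
  by have := sum_idopr (pswap i j U A) f; rewrite /idop => ->; rewrite f_inv.
by rewrite sum_const_mask mulrA [_ * inv_nmasks]mulrC inv_nmasksK mul1r.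
Qed.

Definition prod_state (x : 'I_k -> V) (A : regs) : algC :=
  \prod_(l : 'I_k) \prod_(c : 'I_r) G (x l) (A l c).

Lemma sum_prod_prod (g : 'I_k -> 'I_r -> Y -> algC) :
  \sum_(A : regs) \prod_(l : 'I_k) \prod_(c : 'I_r) g l c (A l c)
  = \prod_(l : 'I_k) \prod_(c : 'I_r) \sum_(y : Y) g l c y.
Proof.
symmetry.
under eq_bigr => l _ do rewrite bigA_distr_bigA.
by rewrite bigA_distr_bigA.
Qed.

Lemma prod_state_pswap x i j U A :
  prod_state x (pswap i j U A)
  = \prod_(l : 'I_k) \prod_(c : 'I_r) G (x (swap_index i j U c l)) (A l c).
Proof.
rewrite /prod_state.
under eq_bigr => l _ do (under eq_bigr => c _ do rewrite !ffunE).
rewrite exchange_big [RHS]exchange_big; apply: eq_bigr => c _.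
rewrite [RHS](reindex_inj (can_inj (swap_indexK i j U c))).
by apply: eq_bigr => l _; rewrite swap_indexK.
Qed.

Lemma prod_state_pswap_eq x i j :
  x i = x j -> forall U A, prod_state x (pswap i j U A) = prod_state x A.
Proof.
move=> hx U A; rewrite prod_state_pswap /prod_state; apply: eq_bigr => l _; apply: eq_bigr => c _.
rewrite /swap_index; case: (U c) => //.
by case: tpermP => [->|->|//]; rewrite hx.
Qed.

Lemma conj_prod_state x A : (prod_state x A)^* = prod_state x A.
Proof.
rewrite /prod_state rmorph_prod /=; apply: eq_bigr => l _.
by rewrite rmorph_prod /=; apply: eq_bigr => c _; rewrite G_real.
Qed.

Lemma sqnorm_prod_state x : sqnorm (prod_state x) = 1.
Proof.
rewrite /sqnorm /dotv.
under eq_bigr => A _ do rewrite conj_prod_state /prod_state -big_split /=.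
under eq_bigr => A _ do (under eq_bigr => l _ do rewrite -big_split /=).
rewrite (sum_prod_prod (fun l c y => G (x l) y * G (x l) y)) big1 // => l _; rewrite big1 // => c _.
exact: overlap_self.
Qed.

Lemma qform_swap_proj x i j :
  qform (swap_proj i j) (prod_state x)
  = inv_nmasks * \sum_(U : mask) \prod_(c : 'I_r) \prod_(l : 'I_k)
      overlap (x (swap_index i j U c l)) (x l).
Proof.
rewrite /qform /swap_proj exchange_big /=.
transitivity (\sum_(B : regs) \sum_(U : mask) \sum_(A : regs)
   (inv_nmasks * prod_state x A * prod_state x B) * (A == pswap i j U B)%:R).
  apply: eq_bigr => B _.
  under eq_bigr => A _ do rewrite conj_prod_state mulr_sumr mulr_sumr mulr_suml.
  rewrite exchange_big; apply: eq_bigr => U _; apply: eq_bigr => A _; ring.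
transitivity (\sum_(B : regs) \sum_(U : mask)
  inv_nmasks * prod_state x (pswap i j U B) * prod_state x B).
  apply: eq_bigr => B _; apply: eq_bigr => U _.
  have := sum_idopr (pswap i j U B) (fun A => inv_nmasks * prod_state x A * prod_state x B).
  by rewrite /idop.
rewrite exchange_big mulr_sumr; apply: eq_bigr => U _.
under eq_bigr => B _ do rewrite -mulrA.
rewrite -mulr_sumr; congr (_ * _).
transitivity (\sum_(B : regs) \prod_(l : 'I_k) \prod_(c : 'I_r)
    (G (x (swap_index i j U c l)) (B l c) * G (x l) (B l c))).
  apply: eq_bigr => B _; rewrite prod_state_pswap /prod_state -big_split; apply: eq_bigr => l _.
  by rewrite -big_split.
rewrite (sum_prod_prod (fun l c y => G (x (swap_index i j U c l)) y * G (x l) y)) exchange_big.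
by apply: eq_bigr => c _; apply: eq_bigr => l _.
Qed.

Lemma qform_swap_proj_neq x i j : x i != x j ->
  qform (swap_proj i j) (prod_state x) = inv_nmasks * (1 + overlap (x i) (x j) ^+ 2) ^+ r.
Proof.
move=> hx; have ij : i != j by apply: contraNneq hx => ->.
rewrite qform_swap_proj; congr (_ * _).
transitivity (\sum_(U : mask) \prod_(c : 'I_r) (if U c then overlap (x i) (x j) ^+ 2 else 1)).
  apply: eq_bigr => U _; apply: eq_bigr => c _; rewrite /swap_index.
  case: (U c).
    rewrite (bigD1 i) //= (bigD1 j) 1?eq_sym //= tpermL tpermR.
    rewrite big1 ?mulr1 /overlap.
      rewrite expr2; congr (_ * _); apply: eq_bigr => y _; exact: mulrC.
    move=> l /andP[lj li]; rewrite tpermD 1?eq_sym //; exact: overlap_self.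
  by rewrite big1 // => l _; exact: overlap_self.
rewrite -(bigA_distr_bigA (fun (c : 'I_r) (b : bool) => if b then overlap (x i) (x j) ^+ 2 else 1)).
by rewrite big_bool /= prodr_const card_ord addrC.
Qed.

Lemma qform_swap_proj_le x i j : x i != x j ->
  qform (swap_proj i j) (prod_state x) <= (5%:R / 8%:R) ^+ r.
Proof.
move=> hx; rewrite qform_swap_proj_neq //.
set w := overlap (x i) (x j).
have w0 : 0 <= w by apply: overlap_ge0.
have w1 : w <= 2%:R^-1 by apply: overlap_le.
have -> : inv_nmasks * (1 + w ^+ 2) ^+ r = ((1 + w ^+ 2) / 2%:R) ^+ r.
  by rewrite /inv_nmasks natrX -exprVn exprMn mulrC.
apply: lerXn2r.
- by rewrite qualifE /= mulr_ge0 ?invr_ge0 ?ler0n // addr_ge0 ?exprn_ge0.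
- by rewrite qualifE /= mulr_ge0 ?invr_ge0 ?ler0n.
have h : w ^+ 2 <= 4%:R^-1.
  have -> : (4%:R : algC)^-1 = 2%:R^-1 * 2%:R^-1 by rewrite -invfM -natrM.
  by rewrite expr2 ler_pM.
apply: (@le_trans _ _ ((1 + 4%:R^-1) / 2%:R)).
  by rewrite ler_wpM2r ?invr_ge0 ?ler0n // lerD2l.
suff -> : (1 + 4%:R^-1) / 2%:R = 5%:R / 8%:R :> algC by [].
by field.
Qed.

End SwapTest.

Section Fingerprint.
Variables (F : finFieldType) (n s : nat).
Hypothesis cardF : #|F| = (2 ^ (2 * s))%N.
Hypothesis bigF : (2 * n <= 2 ^ (2 * s))%N.

(* [amp] is |F|^(-1/2). *)
Definition amp : algC := (2 ^ s)%:R^-1.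
Definition tuple_poly (x : n.-tuple bool) : {poly F} := \poly_(j < n) (nth false x j)%:R.
Definition fingerprint (x : n.-tuple bool) (y : (F * F)%type) : algC :=
  if y.2 == (tuple_poly x).[y.1] then amp else 0.

Lemma conj_amp : amp^* = amp.
Proof. by rewrite /amp fmorphV /= conjC_nat. Qed.

Lemma amp_ge0 : 0 <= amp.
Proof. by rewrite /amp invr_ge0 ler0n. Qed.

Lemma conj_fingerprint x y : (fingerprint x y)^* = fingerprint x y.
Proof. by rewrite /fingerprint; case: ifP => _; rewrite ?conj_amp ?conjC0. Qed.

Lemma overlap_fingerprint x z :
  overlap fingerprint x z = \sum_(a : F) ((tuple_poly x).[a] == (tuple_poly z).[a])%:R * (amp * amp).
Proof.
rewrite /overlap (eq_bigr (fun p => fingerprint x (p.1, p.2) * fingerprint z (p.1, p.2)));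
  last by case.
rewrite -(pair_bigA _ (fun a b => fingerprint x (a, b) * fingerprint z (a, b))).
apply: eq_bigr => a _ /=.
rewrite (bigD1 (tuple_poly x).[a]) //= big1 ?addr0.
  rewrite /fingerprint /= eqxx eq_sym.
  by case: eqP => _; rewrite ?mul1r ?mul0r ?mulr0.
by move=> b nb; rewrite /fingerprint /= (negbTE nb) mul0r.
Qed.

Lemma sum_nat_pred (P : pred F) (c : algC) : \sum_(a : F) (P a)%:R * c = #|P|%:R * c.
Proof.
rewrite -mulr_suml -natr_sum -sum1_card [in RHS]big_mkcond /=.
by congr (_%:R * c); apply: eq_bigr => a _; rewrite /in_mem /=; case: (P a).
Qed.

Lemma amp2 : amp * amp * (2 ^ (2 * s))%:R = 1.
Proof.
have -> : (2 ^ (2 * s))%N = (2 ^ s * 2 ^ s)%N by rewrite -expnD addnn -mul2n.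
have h : ((2 ^ s)%:R : algC) != 0 by rewrite pnatr_eq0 expn_eq0.
rewrite /amp natrM; move: h; move: ((2 ^ s)%:R : algC) => N h.
by field.
Qed.

Lemma overlap_fingerprint_self x : overlap fingerprint x x = 1.
Proof.
rewrite overlap_fingerprint (eq_bigr (fun a => amp * amp)); last by move=> a _; rewrite eqxx mul1r.
rewrite sumr_const -mulr_natr.
have -> : #|[pred _ : F | true]| = #|F| by apply: eq_card.
by rewrite cardF amp2.
Qed.

Lemma overlap_fingerprint_ge0 x z : 0 <= overlap fingerprint x z.
Proof.
rewrite overlap_fingerprint; apply: sumr_ge0 => a _.
by apply: mulr_ge0; [apply: ler0n | apply: mulr_ge0; apply: amp_ge0].
Qed.

Lemma tuple_poly_inj : injective tuple_poly.
Proof.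
move=> x z h; apply: eq_from_tnth => j.
have := congr1 (fun p : {poly F} => p`_j) h; rewrite /= !coef_poly ltn_ord.
rewrite !(tnth_nth false).
by case: (nth false x j); case: (nth false z j) => //= /eqP; rewrite ?oner_eq0 // eq_sym oner_eq0.
Qed.

Lemma overlap_fingerprint_le x z : x != z -> overlap fingerprint x z <= 2%:R^-1.
Proof.
move=> xz; rewrite overlap_fingerprint.
set q := tuple_poly x - tuple_poly z.
have q0 : q != 0 by rewrite subr_eq0; apply: contra xz => /eqP /tuple_poly_inj ->.
have -> : \sum_(a : F) ((tuple_poly x).[a] == (tuple_poly z).[a])%:R * (amp * amp)
          = \sum_(a : F) (root q a)%:R * (amp * amp).
  by apply: eq_bigr => a _; rewrite /root /q hornerD hornerN subr_eq0.
rewrite sum_nat_pred.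
have few_roots : (#|root q| < n.+1)%N.
  have := max_poly_roots q0 (rs := enum (root q)).
  rewrite enum_uniq -cardE => /(_ _ isT) H.
  have : all (root q) (enum (root q)) by apply/allP => a; rewrite mem_enum.
  move=> /H hlt; apply: leq_trans hlt _.
  rewrite /q; apply: leq_trans (size_polyD _ _) _.
  rewrite size_polyN geq_max; apply/andP; split;
    exact: leq_trans (size_poly _ _) (leqnSn n).
have roots_le : (#|root q|%:R : algC) <= n%:R by rewrite ler_nat -ltnS.
apply: (@le_trans _ _ (n%:R * (amp * amp))).
  by rewrite ler_wpM2r // mulr_ge0 // amp_ge0.
have nz : ((2 ^ (2 * s))%:R : algC) != 0 by rewrite pnatr_eq0 expn_eq0.
have -> : amp * amp = ((2 ^ (2 * s))%:R)^-1.
  by apply: (mulIf nz); rewrite amp2 mulVf.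
rewrite ler_pdivrMr ?ltr0n ?expn_gt0 // -[2%:R^-1 * _]mulrC.
rewrite ler_pdivlMr ?ltr0n // -natrM ler_nat mulnC.
exact: bigF.
Qed.

End Fingerprint.

Section Protocol.
Variables (k n s r Q : nat) (F : finFieldType).
Hypothesis cardF : #|F| = (2 ^ (2 * s))%N.
Hypothesis bigF : (2 * n <= 2 ^ (2 * s))%N.
Hypothesis cardQ : #|{: qbasis Q}| = #|{: {ffun 'I_r -> (F * F)%type}}|.

Local Notation Z := {ffun 'I_r -> (F * F)%type}.
Local Notation X := (regs k r (F * F)%type).
Local Notation V := (n.-tuple bool).
Local Notation joint_state x := (prod_state (fingerprint s) x).

(* A message of [Q] qubits is read, through any bijection of bases, as [r] copies of a
   point of [F * F]. *)
Definition reg_dec (u : qbasis Q) : Z := enum_val (cast_ord cardQ (enum_rank u)).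
Definition reg_enc (z : Z) : qbasis Q := enum_val (cast_ord (esym cardQ) (enum_rank z)).
Lemma reg_decK : cancel reg_dec reg_enc.
Proof. by move=> u; rewrite /reg_enc /reg_dec enum_valK cast_ordK enum_rankK. Qed.
Lemma reg_encK : cancel reg_enc reg_dec.
Proof.
move=> z; rewrite /reg_enc /reg_dec enum_valK.
by rewrite -[cardQ in cast_ord cardQ](esymK cardQ) cast_ordK enum_rankK.
Qed.

Definition msg_size := fun _ : 'I_k => Q.
Definition joint_reg (a : jbasis msg_size) : X := [ffun i => reg_dec (a i)].
Definition joint_reg_inv (A : X) : jbasis msg_size := [ffun i => reg_enc (A i)].
Lemma joint_regK : cancel joint_reg joint_reg_inv.
Proof. by move=> a; apply/ffunP => i; rewrite /joint_reg_inv /joint_reg !ffunE reg_decK. Qed.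
Lemma joint_reg_invK : cancel joint_reg_inv joint_reg.
Proof. by move=> A; apply/ffunP => i; rewrite /joint_reg_inv /joint_reg !ffunE reg_encK. Qed.

Lemma sum_joint_reg (g : X -> algC) : \sum_(a : jbasis msg_size) g (joint_reg a) = \sum_(A : X) g A.
Proof. by rewrite (reindex joint_reg (onW_bij _ (Bijective joint_regK joint_reg_invK))). Qed.

Lemma sum_reg_dec (g : Z -> algC) : \sum_(u : qbasis Q) g (reg_dec u) = \sum_(z : Z) g z.
Proof. by rewrite (reindex reg_dec (onW_bij _ (Bijective reg_decK reg_encK))). Qed.

Definition fingerprint_copies (y : V) (u : qbasis Q) : algC :=
  \prod_(c : 'I_r) fingerprint s y (reg_dec u c).
Definition smp_msg (i : 'I_k) (y : V) : op (qbasis (msg_size i)) :=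
  fun u w => fingerprint_copies y u * (fingerprint_copies y w)^*.
Arguments smp_msg : clear implicits.

Lemma density_smp_msg i y : density (smp_msg i y).
Proof.
split.
  move=> v.
  set z := \sum_(a : qbasis Q) (v a)^* * fingerprint_copies y a.
  have -> : \sum_(a : qbasis (msg_size i)) \sum_(b : qbasis (msg_size i))
      (v a)^* * smp_msg i y a b * v b = z * z^*.
    rewrite /z rmorph_sum /= mulr_suml; apply: eq_bigr => a _.
    rewrite mulr_sumr; apply: eq_bigr => b _.
    by rewrite /smp_msg rmorphM /= conjCK; ring.
  exact: mul_conjC_ge0.
rewrite /trace /smp_msg.
transitivity (\sum_(u : qbasis Q)
  \prod_(c : 'I_r) (fingerprint s y (reg_dec u c) * fingerprint s y (reg_dec u c))).
  apply: eq_bigr => u _; rewrite /fingerprint_copies rmorph_prod /= -big_split /=.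
  by apply: eq_bigr => c _; rewrite conj_fingerprint.
rewrite (sum_reg_dec (fun z => \prod_(c : 'I_r) (fingerprint s y (z c) * fingerprint s y (z c)))).
rewrite -(bigA_distr_bigA
  (fun (c : 'I_r) (w : (F * F)%type) => fingerprint s y w * fingerprint s y w)).
by rewrite big1 // => c _; apply: (overlap_fingerprint_self cardF).
Qed.

Lemma tensor_smp_msg (x : 'I_k -> V) a b :
  tensor_states (fun i => smp_msg i (x i)) a b
  = joint_state x (joint_reg a) * (joint_state x (joint_reg b))^*.
Proof.
rewrite /tensor_states /smp_msg big_split /=; congr (_ * _).
  by apply: eq_bigr => i _; rewrite /fingerprint_copies; apply: eq_bigr => c _; rewrite ffunE.
rewrite rmorph_prod; apply: eq_bigr => i _; rewrite /fingerprint_copies; congr (_^*).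
by apply: eq_bigr => c _; rewrite ffunE.
Qed.

Definition joint_op (M : op X) : op (jbasis msg_size) := fun a b => M (joint_reg a) (joint_reg b).

Lemma psd_joint_op M : psd M -> psd (joint_op M).
Proof.
move=> pM v; pose w := fun A => v (joint_reg_inv A).
have := pM w; rewrite -(sum_joint_reg (fun A => \sum_(B : X) (w A)^* * M A B * w B)).
congr (0 <= _); apply: eq_bigr => a _.
rewrite -(sum_joint_reg (fun B => (w (joint_reg a))^* * M (joint_reg a) B * w B)).
by apply: eq_bigr => b _; rewrite /w /joint_op !joint_regK.
Qed.

Lemma outcome_joint_op (O : finType) (Ms : O -> op X) (x : 'I_k -> V) o :
  outcome_prob (fun o => joint_op (Ms o)) (tensor_states (fun i => smp_msg i (x i))) o
  = qform (Ms o) (joint_state x).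
Proof.
rewrite /outcome_prob /joint_op /qform.
under eq_bigr => a _ do under eq_bigr => b _ do rewrite tensor_smp_msg.
rewrite -(sum_joint_reg (fun A => \sum_(B : X) (joint_state x A)^* * Ms o A B * joint_state x B)).
apply: eq_bigr => a _.
rewrite -(sum_joint_reg
  (fun B => (joint_state x (joint_reg a))^* * Ms o (joint_reg a) B * joint_state x B)).
by apply: eq_bigr => b _; ring.
Qed.

Definition pairs : seq ('I_k * 'I_k) := [seq (i, j) | i <- enum 'I_k, j <- enum 'I_k].
Definition swap_tests : seq (op X) := [seq swap_proj p.1 p.2 | p <- pairs].
Definition decode (bs : seq bool) : {set {set 'I_k}} :=
  equivalence_partition (fun i j => nth false bs (index (i, j) pairs)) [set: 'I_k].
Definition referee (P : {set {set 'I_k}}) : op (jbasis msg_size) :=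
  joint_op (seq_meas swap_tests decode P).

Lemma all_orthoproj_swap_tests : all_orthoproj swap_tests.
Proof.
by rewrite /swap_tests; elim: pairs => //= p t IH; split=> //; apply: orthoproj_swap_proj.
Qed.

Lemma povm_referee : povm referee.
Proof.
split.
  by move=> P; apply: psd_joint_op; apply: psd_seq_meas; apply: all_orthoproj_swap_tests.
move=> a b; rewrite /referee /joint_op seq_meas_sum; last exact: all_orthoproj_swap_tests.
by rewrite /idop (inj_eq (can_inj joint_regK)).
Qed.

Lemma outcome_referee x P :
  outcome_prob referee (tensor_states (fun i => smp_msg i (x i))) P
  = qform (seq_meas swap_tests decode P) (joint_state x).
Proof. exact: outcome_joint_op. Qed.

Definition eq_bits (x : 'I_k -> V) := [seq (x p.1 == x p.2) | p <- pairs].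

Lemma mem_pairs i j : (i, j) \in pairs.
Proof. by apply: allpairs_f; rewrite mem_enum. Qed.

Lemma nth_eq_bits x i j : nth false (eq_bits x) (index (i, j) pairs) = (x i == x j).
Proof.
rewrite /eq_bits (nth_map (i, j)); last by rewrite index_mem mem_pairs.
by rewrite nth_index // mem_pairs.
Qed.

Lemma decode_correct x : groupbyeq_correct x (decode (eq_bits x)).
Proof.
have -> : decode (eq_bits x) = equivalence_partition (fun i j => x i == x j) [set: 'I_k].
  rewrite /decode; congr equivalence_partition.
  apply: functional_extensionality => i; apply: functional_extensionality => j.
  by rewrite nth_eq_bits.
set P := equivalence_partition _ _.
have eqR : {in [set: 'I_k] & &, equivalence_rel (fun i j => x i == x j)}.
  by move=> a b c _ _ _; split => //; move/eqP ->.
have hP := equivalence_partitionP eqR.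
rewrite /groupbyeq_correct hP /=.
have [/eqP cov tiP _] := and3P hP.
apply/forallP => i; apply/forallP => j; apply/eqP; apply/idP/idP.
  case/existsP => B /andP[BP /andP[iB jB]].
  rewrite -(def_pblock tiP BP iB) in jB.
  by rewrite -(pblock_equivalence_partition eqR) ?inE.
move=> hij; apply/existsP; exists (pblock P i).
rewrite pblock_mem ?cov ?inE //= mem_pblock cov inE /=.
by rewrite (pblock_equivalence_partition eqR) ?inE.
Qed.

Lemma swap_test_error_le x :
  all2 (fun P b => sqnorm (opv (op_compl (outcome_proj b P)) (joint_state x)) <= (5%:R / 8%:R) ^+ r)
    swap_tests (eq_bits x).
Proof.
rewrite /swap_tests /eq_bits; apply: all2_map_map => -[i j] /=.
case: eqVneq => [eq_x | neq_x] /=.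
  have -> : opv (op_compl (swap_proj i j : op X)) (joint_state x) = fun _ => 0.
    apply: functional_extensionality => A.
    by rewrite opv_compl swap_proj_fix ?subrr // => U B; apply: prod_state_pswap_eq.
  rewrite /sqnorm /dotv big1 ?exprn_ge0 ?divr_ge0 ?ler0n // => A _.
  by rewrite mulr0.
have -> : opv (op_compl (op_compl (swap_proj i j : op X))) (joint_state x)
    = opv (swap_proj i j : op X) (joint_state x).
  apply: functional_extensionality => A; rewrite /opv.
  by apply: eq_bigr => B _; rewrite op_complK.
rewrite sqnorm_proj_qform; last exact: orthoproj_swap_proj.
apply: (qform_swap_proj_le r (@conj_fingerprint F n s) (overlap_fingerprint_self cardF)) => //.
- by move=> u w _; apply: overlap_fingerprint_ge0.
- exact: overlap_fingerprint_le.
Qed.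

Lemma referee_success x : ((k * k)%:R : algC) * (5%:R / 8%:R) ^+ r <= 64%:R^-1 ->
  2%:R / 3%:R <= \sum_(P | groupbyeq_correct x P)
     outcome_prob referee (tensor_states (fun i => smp_msg i (x i))) P.
Proof.
move=> small.
have size_tests : size swap_tests = (k * k)%N.
  by rewrite size_map size_allpairs size_enum_ord.
rewrite (bigD1 (decode (eq_bits x))) ?decode_correct //= outcome_referee.
rewrite -[X in X <= _]addr0; apply: lerD.
  apply: qform_seq_meas_ge (swap_test_error_le x) _; first exact: all_orthoproj_swap_tests.
    exact: (sqnorm_prod_state r (@conj_fingerprint F n s) (overlap_fingerprint_self cardF)).
  by rewrite size_tests.
apply: sumr_ge0 => P _; rewrite outcome_referee.
exact/psd_seq_meas/all_orthoproj_swap_tests.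
Qed.

End Protocol.

Lemma double_le_pow4_log (n L : nat) : (n < 2 ^ L.+1)%N -> (2 * n <= 2 ^ (2 * L.+1))%N.
Proof.
have -> : (2 ^ (2 * L.+1) = 2 ^ L.+1 * 2 ^ L.+1)%N by rewrite mul2n -addnn expnD.
by move: (2 ^ L.+1)%N => N n_lt; nia.
Qed.

Lemma sq_le_pow4_log (k L : nat) : (k < 2 ^ L.+1)%N -> (64 * (k * k) <= 4 ^ (L + 4))%N.
Proof.
have -> : (4 ^ (L + 4) = 256 * (2 ^ L * 2 ^ L))%N.
  by rewrite expnD -[4%N]/(2 * 2)%N expnMn mulnC.
by rewrite expnS; move: (2 ^ L)%N => N k_lt; nia.
Qed.

Lemma sq_mul_geom_le (k t : nat) : (64 * (k * k) <= 4 ^ t)%N ->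
  ((k * k)%:R : algC) * (5%:R / 8%:R) ^+ (3 * t) <= 64%:R^-1.
Proof.
move=> k_small.
have cube : (5%:R / 8%:R : algC) ^+ 3 <= 4%:R^-1.
  have -> : (4%:R^-1 : algC) = (5%:R / 8%:R) ^+ 3 + 3%:R / 512%:R by field.
  by rewrite lerDl divr_ge0 ?ler0n.
have geom : (5%:R / 8%:R : algC) ^+ (3 * t) <= ((4 ^ t)%:R)^-1.
  rewrite exprM natrX -exprVn; apply: lerXn2r => //.
  - by rewrite qualifE /= exprn_ge0 // divr_ge0 ?ler0n.
  - by rewrite qualifE /= invr_ge0 ler0n.
apply: (@le_trans _ _ ((k * k)%:R * ((4 ^ t)%:R)^-1)).
  by rewrite ler_wpM2l ?ler0n.
rewrite ler_pdivrMr ?ltr0n ?expn_gt0 // mulrC ler_pdivlMr ?ltr0n //.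
by rewrite -natrM ler_nat mulnC.
Qed.

Theorem theorem7 :
  exists C : nat, forall k n : nat, (2 <= k)%N -> (2 <= n)%N ->
  exists (q : 'I_k -> nat)
         (msg : forall i : 'I_k, n.-tuple bool -> op (qbasis (q i)))
         (E : {set {set 'I_k}} -> op (jbasis q)),
    [/\ (\sum_(i < k) q i <= C * (k * trunc_log 2 k * trunc_log 2 n))%N,
        (forall (i : 'I_k) (y : n.-tuple bool), density (msg i y)),
        povm E &
        forall x : 'I_k -> n.-tuple bool,
          2%:R / 3%:R <=
          \sum_(P : {set {set 'I_k}} | groupbyeq_correct x P)
             outcome_prob E (tensor_states (fun i => msg i (x i))) P].
Proof.
exists 120%N => k n k_ge2 n_ge2.
set Lk := trunc_log 2 k; set Ln := trunc_log 2 n.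
have Lk_gt0 : (0 < Lk)%N by rewrite trunc_log_gt0.
have Ln_gt0 : (0 < Ln)%N by rewrite trunc_log_gt0.
(* |F| = 4^s >= 2n, and k^2 (5/8)^r <= 1/64. *)
pose s := Ln.+1; pose r := (3 * (Lk + 4))%N; pose Q := (r * (4 * s))%N.
have [F _ cardF] := @pPrimePowerField 2 (2 * s) isT isT.
have cardQ : #|{: qbasis Q}| = #|{: {ffun 'I_r -> (F * F)%type}}|.
  rewrite !card_ffun card_bool card_prod cardF !card_ord -expnD -expnM.
  by congr expn; rewrite /Q; lia.
exists (msg_size Q), (fun i => @smp_msg k n s r Q F cardQ i), (referee cardQ).
split.
- by rewrite /msg_size big_const_ord iter_addn_0 /Q /r /s; nia.
- exact: density_smp_msg.
- exact: povm_referee.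
move=> x; apply: (referee_success cardF (double_le_pow4_log (trunc_log_ltn _ _))) => //.
exact/sq_mul_geom_le/sq_le_pow4_log/trunc_log_ltn.
Qed.
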